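(* Let $\beta>0$, $t>0$ and let $\gamma$ be a path in the time interval $[0,t]$ with at most $\beta t$ jumps. Then there are at least $\frac{\sqrt t}{4}-1$ disjoint time intervals contained in $[0,\frac t2]$ that are favorable for $\gamma$.
   Context: A path in the time interval $[0,t]$ is a finite sequence of space-time points in $\mathbb{Z}\times[0,t]$ with nondecreasing times, whose consecutive segments are either vertical (same site) or horizontal jumps between neighbouring sites at a fixed time; its jumps are these horizontal segments. A time interval $[s-\sqrt t,s)\subseteq[0,t]$ is favorable for $\gamma$ if for every $u\in[s-\sqrt t,s)$ the number of jumps of $\gamma$ during $[u,s)$ is at most $4\beta|s-u|$. *)

From Stdlib Require Import Reals Lra ZArith List.
Open Scope R_scope.

(* A space-time point (x, s) : Z * R.  A path is a finite list of points. *)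
Definition stpoint := (Z * R)%type.

Definition good_segment (a b : stpoint) : Prop :=
  snd a <= snd b /\
  (fst a = fst b \/ (Z.abs (fst a - fst b) = 1%Z /\ snd a = snd b)).

Fixpoint consecutive_ok (p : list stpoint) : Prop :=
  match p with
  | a :: ((b :: _) as q) => good_segment a b /\ consecutive_ok q
  | _ => True
  end.

Definition is_path (t : R) (p : list stpoint) : Prop :=
  (forall a, In a p -> 0 <= snd a <= t) /\ consecutive_ok p.

Fixpoint jump_times (p : list stpoint) : list R :=
  match p with
  | a :: ((b :: _) as q) =>
      if Z.eqb (fst a) (fst b) then jump_times q else snd a :: jump_times q
  | _ => nil
  end.

Definition num_jumps (p : list stpoint) : nat := length (jump_times p).

Definition in_Ico (u s r : R) : bool :=
  if Rle_dec u r then (if Rlt_dec r s then true else false) else false.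

Definition num_jumps_in (p : list stpoint) (u s : R) : nat :=
  length (filter (in_Ico u s) (jump_times p)).

Definition interval_of (t s : R) (u : R) : Prop := s - sqrt t <= u < s.

Definition favorable (beta t : R) (p : list stpoint) (s : R) : Prop :=
  0 <= s - sqrt t /\ s <= t /\
  forall u, s - sqrt t <= u < s ->
    INR (num_jumps_in p u s) <= 4 * beta * Rabs (s - u).

(* Let phi(x) = 4 beta x - (number of jumps before x).  It increases at rate
   4 beta between jumps and drops by one at each jump, so it reaches every
   level c >= 0 and the first time s it does so satisfies phi(u) < c <= phi(s)
   for u < s; hence at most 4 beta (s - u) jumps happen in [u, s), i.e. the
   interval ending at s is favorable.  Taking the levels 4 beta sqrt t k,
   k = 1 .. floor(sqrt t / 4), the first passage times are sqrt t apart (phi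
   grows by at most 4 beta sqrt t over a time sqrt t), lie in [sqrt t, t/2]
   because phi(t/2) >= 2 beta t - beta t, and so give the required disjoint
   favorable intervals. *)
From Stdlib Require Import Reals List Arith ZArith Lra Lia Wf_nat ClassicalEpsilon.
Open Scope R_scope.

Definition jumps_before (J : list R) (x : R) : nat :=
  length (filter (fun r => if Rlt_dec r x then true else false) J).

Definition potential (b : R) (J : list R) (x : R) : R :=
  4 * b * x - INR (jumps_before J x).

Lemma jumps_before_le_length J x : (jumps_before J x <= length J)%nat.
Proof.
  unfold jumps_before; induction J as [|a J IH]; simpl; [lia|].
  destruct Rlt_dec; simpl; lia.
Qed.

Lemma jumps_before_mono J u s : u <= s -> (jumps_before J u <= jumps_before J s)%nat.
Proof.
  intro Hus; unfold jumps_before; induction J as [|a J IH]; simpl; [lia|].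
  destruct (Rlt_dec a u), (Rlt_dec a s); simpl; try lia; lra.
Qed.

Lemma jumps_in_Ico_add J u s : u <= s ->
  (length (filter (in_Ico u s) J) + jumps_before J u = jumps_before J s)%nat.
Proof.
  intro Hus; unfold jumps_before; induction J as [|a J IH]; simpl; [lia|].
  unfold in_Ico at 1.
  destruct (Rle_dec u a), (Rlt_dec a s), (Rlt_dec a u); simpl; try lia; lra.
Qed.

Lemma potential_increase_le b J u s : u <= s ->
  potential b J s - potential b J u <= 4 * b * (s - u).
Proof.
  intro Hus; unfold potential.
  apply (jumps_before_mono J), le_INR in Hus; lra.
Qed.

Section FirstPassage.

Variables (b : R) (J : list R).
Hypothesis b_pos : 0 < b.

(* The first passage time at level c is (c + k) / (4 b) for the least k with at
   most k jumps before that time, so it is found by a search over nat. *)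
Lemma first_passage_exists c :
  exists s, c <= potential b J s /\ forall u, u < s -> potential b J u < c.
Proof.
  set (time k := (c + INR k) / (4 * b)).
  set (P k := (jumps_before J (time k) <= k)%nat).
  destruct (dec_inh_nat_subset_has_unique_least_element P) as [k [[Pk k_least] _]].
  - intro n; unfold P; destruct (le_lt_dec (jumps_before J (time n)) n); [left|right]; lia.
  - exists (length J); apply jumps_before_le_length.
  - assert (time_scaled : forall n, 4 * b * time n = c + INR n)
      by (intro n; unfold time; field; lra).
    exists (time k); split.
    + unfold potential; rewrite time_scaled.
      apply le_INR in Pk; lra.
    + intros u Hu; destruct (Rlt_or_le (potential b J u) c) as [|Hc]; auto.
      exfalso; set (m := jumps_before J u) in *.
      assert (Hm : time m <= u).
      { apply Rmult_le_reg_l with (4 * b); [lra|].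
        rewrite time_scaled; unfold potential in Hc; fold m in Hc; lra. }
      assert (Pm : P m) by (apply jumps_before_mono, Hm).
      apply k_least, le_INR in Pm.
      assert (time k <= time m)
        by (apply Rmult_le_compat_r; [left; apply Rinv_0_lt_compat|]; lra).
      lra.
Qed.

Definition first_passage (c : R) : R :=
  proj1_sig (constructive_indefinite_description _ (first_passage_exists c)).

Lemma first_passage_reached c : c <= potential b J (first_passage c).
Proof. unfold first_passage; destruct constructive_indefinite_description; simpl; tauto. Qed.

Lemma first_passage_before c u : u < first_passage c -> potential b J u < c.
Proof. unfold first_passage; destruct constructive_indefinite_description; simpl; firstorder. Qed.

Lemma first_passage_le c u : c <= potential b J u -> first_passage c <= u.
Proof.
  intro Hu; destruct (Rle_or_lt (first_passage c) u) as [|Hlt]; auto.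
  apply first_passage_before in Hlt; lra.
Qed.

Lemma first_passage_ge c : c <= 4 * b * first_passage c.
Proof.
  pose proof (first_passage_reached c); pose proof (pos_INR (jumps_before J (first_passage c))).
  unfold potential in *; lra.
Qed.

Lemma first_passage_jumps_in c u : u <= first_passage c ->
  INR (length (filter (in_Ico u (first_passage c)) J)) <= 4 * b * (first_passage c - u).
Proof.
  intro Hu.
  pose proof (jumps_in_Ico_add J u _ Hu) as E.
  apply (f_equal INR) in E; rewrite plus_INR in E.
  destruct Hu as [Hlt|Heq].
  - pose proof (first_passage_reached c); pose proof (first_passage_before c u Hlt).
    unfold potential in *; lra.
  - rewrite Heq in E |- *; lra.
Qed.

Lemma first_passage_spacing c c' L : 0 <= L -> c + 4 * b * L <= c' ->
  first_passage c + L <= first_passage c'.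
Proof.
  intros HL Hc.
  destruct (Rle_or_lt (first_passage c + L) (first_passage c')) as [|Hlt]; auto; exfalso.
  pose proof (first_passage_before c (first_passage c' - L) ltac:(lra)).
  pose proof (potential_increase_le b J (first_passage c' - L) (first_passage c') ltac:(lra)).
  pose proof (first_passage_reached c'); lra.
Qed.

End FirstPassage.

Lemma first_passage_favorable beta t gamma (beta_pos : 0 < beta) c :
  0 < t -> INR (num_jumps gamma) <= beta * t ->
  4 * beta * sqrt t <= c <= beta * t ->
  let s := first_passage beta (jump_times gamma) beta_pos c in
  (forall u, interval_of t s u -> 0 <= u <= t / 2) /\ favorable beta t gamma s.
Proof.
  intros t_pos few_jumps Hc s.
  set (J := jump_times gamma) in *; unfold num_jumps in few_jumps; fold J in few_jumps.
  assert (sqrt_le_s : sqrt t <= s).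
  { pose proof (first_passage_ge beta J beta_pos c) as Hge; fold s in Hge.
    apply Rmult_le_reg_l with (4 * beta); lra. }
  assert (s_le_half : s <= t / 2).
  { apply first_passage_le; unfold potential.
    pose proof (le_INR _ _ (jumps_before_le_length J (t / 2))); lra. }
  split; [intros u Hu; unfold interval_of in Hu; lra|].
  repeat split; [lra | lra |].
  intros u Hu; unfold num_jumps_in; fold J.
  rewrite Rabs_right by lra.
  apply first_passage_jumps_in; fold s; lra.
Qed.

Lemma interval_of_disjoint t s s' u : s + sqrt t <= s' ->
  ~ (interval_of t s u /\ interval_of t s' u).
Proof. unfold interval_of; lra. Qed.

Lemma nat_floor x : 0 <= x -> exists n, INR n <= x < INR n + 1.
Proof.
  intro x_nonneg; destruct (base_Int_part x) as [Hle Hgt].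
  assert (Int_part_nonneg : (0 <= Int_part x)%Z)
    by (apply Z.lt_succ_r, lt_IZR; rewrite succ_IZR; lra).
  exists (Z.to_nat (Int_part x)).
  rewrite INR_IZR_INZ, Z2Nat.id by exact Int_part_nonneg; lra.
Qed.

Lemma nth_map_seq (f : nat -> R) n i : (i < n)%nat ->
  nth i (map f (seq 0 n)) 0 = f i.
Proof.
  intro Hi; rewrite (nth_indep _ _ (f 0%nat)) by (rewrite length_map, length_seq; lia).
  rewrite map_nth, seq_nth by lia; reflexivity.
Qed.

Theorem lemma8 (beta t : R) (gamma : list stpoint) :
  0 < beta -> 0 < t ->
  is_path t gamma ->
  INR (num_jumps gamma) <= beta * t ->
  exists ss : list R,
    sqrt t / 4 - 1 <= INR (length ss) /\
    (forall s, In s ss ->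
       (forall u, interval_of t s u -> 0 <= u <= t / 2) /\
       favorable beta t gamma s) /\
    (forall i j, (i < length ss)%nat -> (j < length ss)%nat -> i <> j ->
       forall u, ~ (interval_of t (nth i ss 0) u /\ interval_of t (nth j ss 0) u)).
Proof.
  intros beta_pos t_pos _ few_jumps.
  set (L := sqrt t).
  assert (L_pos : 0 < L) by (apply sqrt_lt_R0; lra).
  assert (L_sq : L * L = t) by (apply sqrt_sqrt; lra).
  assert (betaL_pos : 0 < beta * L) by (apply Rmult_lt_0_compat; lra).
  destruct (nat_floor (L / 4)) as [n [n_le n_gt]]; [lra|].
  set (level k := 4 * beta * L * INR (S k)).
  set (s k := first_passage beta (jump_times gamma) beta_pos (level k)).
  assert (level_step : forall i j, (i < j)%nat -> level i + 4 * beta * L <= level j).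
  { intros i j Hij; unfold level.
    assert (INR (S i) + 1 <= INR (S j)) by (rewrite <- S_INR; apply le_INR; lia).
    nra. }
  exists (map s (seq 0 n)); rewrite length_map, length_seq.
  split; [lra|]; split.
  - intros x Hx; apply in_map_iff in Hx as [k [<- Hk]]; apply in_seq in Hk.
    apply first_passage_favorable; auto.
    assert (1 <= INR (S k) <= L / 4).
    { split; [apply (le_INR 1); lia|]. apply Rle_trans with (INR n); [apply le_INR; lia | lra]. }
    unfold level; fold L; rewrite <- L_sq; split; nra.
  - intros i j Hi Hj Hij u; rewrite !nth_map_seq by lia.
    destruct (Nat.lt_total i j) as [Hlt|[Heq|Hlt]]; [| contradiction |].
    + apply interval_of_disjoint, first_passage_spacing; [apply sqrt_pos | auto].
    + intros Hu; apply (interval_of_disjoint t (s j) (s i) u); [|tauto].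
      apply first_passage_spacing; [apply sqrt_pos | auto].
Qed.
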